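(* Let $A$ be a simply laced hyperbolic generalized Cartan matrix with node set $I$, $n=|I|-1$. Let $\phi$ be any facet of the projectivized Weyl chamber $PC$ and $p$ any point of $\phi$. Then there is a facet $\phi'$ of $PC$ making dihedral angle $\pi/3$ with $\phi$ such that the hyperbolic distance $d(p,\phi\cap\phi')\leq\cosh^{-1}\sqrt{4/3}$.
   Context: $A=(a_{ij})_{i,j\in I}$ is simply laced ($a_{ii}=2$, $a_{ij}\in\{0,-1\}$ for $i\ne j$) and hyperbolic (connected Dynkin diagram, not of finite or affine type, every proper connected subdiagram of finite or affine type). Let $\Lambda=\bigoplus_i\mathbb{Z}\alpha_i$ with symmetric form $\alpha_i\cdot\alpha_j=a_{ij}$; then $\Lambda\otimes\mathbb{R}$ has signature $(n,1)$. The fundamental chamber is $C=\{x\in\Lambda\otimes\mathbb{R}: x\cdot\alpha_i\le0\text{ for all }i\}$; the vectors of negative norm form two components, and the future cone $F$ is the one that $C$ meets. Its projectivization $PF$ is hyperbolic $n$-space $H^n$, with distance between points represented by $x,y\in F$ given by $\cosh^{-1}\sqrt{(x\cdot y)^2/(x^2y^2)}$. $C$ lies in the closure $\overline F$, and its projectivization $PC$ is a hyperbolic simplex (together with its ideal vertices) in $\overline{H^n}$, whose facets are $\phi_i=PC\cap P(\alpha_i^\perp)$, $i\in I$; facets $\phi_i,\phi_j$ ($i\ne j$) meet at angle $\pi/3$ exactly when $a_{ij}=-1$ and at angle $\pi/2$ when $a_{ij}=0$. *)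

From HB Require Import structures.
From mathcomp Require Import all_boot all_order all_algebra.
From mathcomp Require Import all_classical all_reals all_analysis.
Set Implicit Arguments. Unset Strict Implicit. Unset Printing Implicit Defensive.
Import Order.TTheory GRing.Theory Num.Theory.
Local Open Scope ring_scope.

Definition simply_laced (m : nat) (A : 'M[int]_m) : Prop :=
  (forall i, A i i = 2) /\
  (forall i j, i != j -> A i j = 0 \/ A i j = -1) /\
  (forall i j, A i j = 0 <-> A j i = 0).

Definition dynkin_rel (m : nat) (A : 'M[int]_m) (J : {set 'I_m}) : rel 'I_m :=
  fun i j => [&& i \in J, j \in J, i != j & A i j != 0].

Definition connected_sub (m : nat) (A : 'M[int]_m) (J : {set 'I_m}) : Prop :=
  J != finset.set0 /\ forall i j, i \in J -> j \in J -> connect (dynkin_rel A J) i j.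

Definition subform (R : realType) (m : nat) (A : 'M[int]_m) (J : {set 'I_m})
  (v : 'I_m -> R) : R :=
  \sum_(i in J) \sum_(j in J) v i * (A i j)%:~R * v j.

(* finite type (for a connected simply laced diagram): positive definite *)
Definition finite_type_sub (R : realType) (m : nat) (A : 'M[int]_m)
  (J : {set 'I_m}) : Prop :=
  forall v : 'I_m -> R, (exists2 i, i \in J & v i != 0) -> 0 < subform A J v.

(* affine type (for a connected simply laced diagram):
   positive semidefinite but not positive definite *)
Definition affine_type_sub (R : realType) (m : nat) (A : 'M[int]_m)
  (J : {set 'I_m}) : Prop :=
  (forall v : 'I_m -> R, 0 <= subform A J v) /\ ~ finite_type_sub R A J.

Definition hyperbolic (R : realType) (m : nat) (A : 'M[int]_m) : Prop :=
  connected_sub A [set: 'I_m] /\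
  ~ finite_type_sub R A [set: 'I_m] /\ ~ affine_type_sub R A [set: 'I_m] /\
  forall J : {set 'I_m}, J \proper [set: 'I_m] -> connected_sub A J ->
    finite_type_sub R A J \/ affine_type_sub R A J.

(* Lambda (x) R = R^I in the basis (alpha_i); x . y = sum x_i a_ij y_j *)
Definition gram_form (R : realType) (m : nat) (A : 'M[int]_m) (x y : 'I_m -> R) : R :=
  \sum_i \sum_j x i * (A i j)%:~R * y j.

Definition sroot (R : realType) (m : nat) (i : 'I_m) : 'I_m -> R :=
  fun j => (j == i)%:R.

Definition in_chamber (R : realType) (m : nat) (A : 'M[int]_m) (x : 'I_m -> R) : Prop :=
  forall i, gram_form A x (sroot R i) <= 0.

Definition acosh (R : realType) (t : R) : R := ln (t + Num.sqrt (t ^+ 2 - 1)).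

(* hyperbolic distance between the points of H^n represented by x, y *)
Definition hdist (R : realType) (m : nat) (A : 'M[int]_m) (x y : 'I_m -> R) : R :=
  acosh (Num.sqrt ((gram_form A x y) ^+ 2 / (gram_form A x x * gram_form A y y))).

(* dihedral angle between facets phi_i and phi_j (normals alpha_i, alpha_j) *)
Definition dihedral_angle (R : realType) (m : nat) (A : 'M[int]_m) (i j : 'I_m) : R :=
  acos (- gram_form A (sroot R i) (sroot R j) /
        Num.sqrt (gram_form A (sroot R i) (sroot R i) * gram_form A (sroot R j) (sroot R j))).

(** Let W be the inverse of the Gram matrix. Every coordinate hyperplane is
    spanned by the simple roots of a proper subdiagram, hence is positive
    semidefinite, while x is timelike; so W exists and, the fundamental weights
    lying in the closed future cone, has nonpositive entries. Write x = -c W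
    with c_k = -x.alpha_k >= 0 and c_i = 0, and let j be the neighbour of i
    minimising c_j. Replacing c by the smaller coordinates of c_j (2 e_i - A e_i)
    can only increase the norm, which gives -x.x >= 2 c_j^2. Moving x along
    alpha_j + alpha_i/2, which is orthogonal to alpha_i, until it reaches the
    facet of alpha_j stays in the chamber, and the cosh^2 of the distance moved
    is 1 + 2 c_j^2 / (3 (-x.x)) <= 4/3. *)

From HB Require Import structures.
From mathcomp Require Import all_boot all_order all_algebra.
From mathcomp Require Import all_classical all_reals all_analysis.
From mathcomp Require Import ring lra.
Import Order.TTheory GRing.Theory Num.Theory.
Local Open Scope ring_scope.
Set Implicit Arguments. Unset Strict Implicit. Unset Printing Implicit Defensive.

Lemma discriminant_le0 (R : realFieldType) (a b c : R) : 0 <= a ->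
  (forall t, 0 <= c + 2 * t * b + t ^+ 2 * a) -> b ^+ 2 <= a * c.
Proof.
move=> a_ge0 q_ge0; have [a0|a_neq0] := eqVneq a 0.
  rewrite a0 mul0r; have [->|b_neq0] := eqVneq b 0; first by rewrite expr0n.
  have := q_ge0 (- (c + 1) / (2 * b)); rewrite a0 mulr0 addr0.
  have -> : 2 * (- (c + 1) / (2 * b)) * b = - (c + 1) by field.
  lra.
have a_gt0 : 0 < a by rewrite lt_def a_neq0.
have := q_ge0 (- b / a).
have -> : c + 2 * (- b / a) * b + (- b / a) ^+ 2 * a = (a * c - b ^+ 2) / a by field.
by rewrite pmulr_lge0 ?invr_gt0 // subr_ge0.
Qed.

Lemma cos_pi_div3 (R : realType) : cos (pi / 3 : R) = 1 / 2.
Proof.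
have pi_gt0 := pi_gt0 R.
have c_gt0 : 0 < cos (pi / 3 : R) by apply: cos_gt0_pihalf; apply/andP; split; lra.
have : cos (pi / 3 *+ 2) = - cos (pi / 3 : R).
  have -> : pi / 3 *+ 2 = pi - pi / 3 :> R by rewrite mulr2n; field.
  by rewrite cosB cospi sinpi mul0r addr0 mulN1r.
rewrite cos_mulr2n mulr2n; nra.
Qed.

Lemma acos_half (R : realType) : acos (1 / 2 : R) = pi / 3.
Proof.
have pi_gt0 := pi_gt0 R.
by rewrite -cos_pi_div3 cosK // in_itv /=; apply/andP; split; lra.
Qed.

Lemma ler_acosh (R : realType) (a b : R) : 1 <= a -> a <= b -> acosh a <= acosh b.
Proof.
move=> a_ge1 ab; rewrite /acosh ler_ln ?posrE; first last.
- by apply: ltr_wpDr (sqrtr_ge0 _) _; lra.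
- by apply: ltr_wpDr (sqrtr_ge0 _) _; lra.
apply: lerD => //; apply: ler_wsqrtr; apply: lerB => //.
rewrite ler_pXn2r ?nnegrE //; lra.
Qed.

Lemma acosh_sqrt_ratio_le (R : realType) (p d : R) : p < 0 -> 0 <= d -> 3 * d <= - p ->
  acosh (Num.sqrt ((p - d) ^+ 2 / (p * (p - d)))) <= acosh (Num.sqrt (4 / 3)).
Proof.
move=> p_lt0 d_ge0 dp; have q_lt0 : p - d < 0 by lra.
have -> : (p - d) ^+ 2 / (p * (p - d)) = 1 + d / - p.
  by field; rewrite !lt_eqF.
have dp_le : d / - p <= 1 / 3 by rewrite ler_pdivrMr ?oppr_gt0 //; lra.
have dp_ge0 : 0 <= d / - p by rewrite divr_ge0 // oppr_ge0 ltW.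
apply: ler_acosh; first by rewrite -[leLHS]sqrtr1; apply: ler_wsqrtr; lra.
by apply: ler_wsqrtr; lra.
Qed.

Section BilinearForm.
Variables (R : realType) (m : nat).
Implicit Types (P : 'M[R]_m) (a b c u w : 'rV[R]_m).

Definition form P a b : R := (a *m P *m b^T) 0 0.

Lemma formDl P a b c : form P (a + b) c = form P a c + form P b c.
Proof. by rewrite /form !mulmxDl mxE. Qed.

Lemma formZl P s a c : form P (s *: a) c = s * form P a c.
Proof. by rewrite /form -!scalemxAl mxE. Qed.

Lemma formDr P a b c : form P c (a + b) = form P c a + form P c b.
Proof. by rewrite /form linearD /= mulmxDr mxE. Qed.

Lemma formZr P s a c : form P c (s *: a) = s * form P c a.
Proof. by rewrite /form linearZ /= -scalemxAr mxE. Qed.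

Lemma form_sum P a b : form P a b = \sum_k \sum_l a 0 k * P k l * b 0 l.
Proof.
rewrite /form mxE exchange_big; apply: eq_bigr => l _.
by rewrite mxE big_distrl; apply: eq_bigr => k _; rewrite !mxE.
Qed.

Lemma form_delta P a k : form P a 'e_k = (a *m P) 0 k.
Proof. by rewrite /form trmx_delta -colE mxE. Qed.

Lemma form_antitone P a b : (forall k l, P k l <= 0) ->
  (forall k, b 0 k <= a 0 k <= 0) -> form P b b <= form P a a.
Proof.
move=> P_le0 ab; rewrite !form_sum; apply: ler_sum => k _; apply: ler_sum => l _.
have /andP[bak ak0] := ab k; have /andP[bal al0] := ab l.
have : a 0 k * a 0 l <= b 0 k * b 0 l.
  by rewrite -mulrNN -[leRHS]mulrNN; apply: ler_pM; lra.
have := P_le0 k l; nra.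
Qed.

Lemma row_coord_neq0 a : a != 0 -> exists k, a 0 k != 0.
Proof.
move=> a_neq0; have /existsP[k ak] : [exists k, a 0 k != 0].
  rewrite -negb_forall; apply: contra a_neq0 => /forallP a0.
  by apply/eqP/rowP => k; rewrite mxE; apply/eqP.
by exists k.
Qed.

Definition fund_weight P k : 'rV[R]_m := 'e_k *m invmx P.

Lemma fund_weight_coord P k l : fund_weight P k 0 l = invmx P k l.
Proof. by rewrite /fund_weight -rowE mxE. Qed.

Section Symmetric.
Variable P : 'M[R]_m.
Hypothesis Psym : P^T = P.

Lemma formC a b : form P a b = form P b a.
Proof.
rewrite /form -[in LHS](trmxK (a *m P *m b^T)) [in LHS]mxE.
by rewrite !trmx_mul trmxK Psym mulmxA.
Qed.

Lemma form_sqr a b s :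
  form P (a + s *: b) (a + s *: b) = form P a a + 2 * s * form P a b + s ^+ 2 * form P b b.
Proof. rewrite !formDl !formDr !formZl !formZr (formC b a); ring. Qed.

Lemma form_cauchy_schwarz a b : 0 <= form P a a ->
  (forall t, 0 <= form P (b + t *: a) (b + t *: a)) ->
  form P a b ^+ 2 <= form P a a * form P b b.
Proof.
move=> aa_ge0 psd; apply: discriminant_le0 => // t.
by rewrite (formC a b) -form_sqr.
Qed.

Hypothesis Punit : P \in unitmx.

Lemma form_weight k b : form P (fund_weight P k) b = b 0 k.
Proof. by rewrite /form /fund_weight -(mulmxA (delta_mx 0 k)) mulVmx // mulmx1 -rowE !mxE. Qed.

Lemma form_weights k l : form P (fund_weight P k) (fund_weight P l) = invmx P k l.
Proof.
by rewrite form_weight fund_weight_coord -{1}Psym -trmx_inv mxE.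
Qed.

Lemma form_invmx a b : form (invmx P) (a *m P) (b *m P) = form P a b.
Proof.
by rewrite /form trmx_mul Psym -!mulmxA (mulmxA (invmx P)) mulVmx // mul1mx.
Qed.

End Symmetric.

Section Lorentzian.
Variable P : 'M[R]_m.
Hypothesis Psym : P^T = P.
Hypothesis hyperplane_psd : forall k (y : 'rV[R]_m), y 0 k = 0 -> 0 <= form P y y.

Lemma form_shift_ge0 a w k : a 0 k != 0 ->
  exists2 t, t * a 0 k = - w 0 k & 0 <= form P (w + t *: a) (w + t *: a).
Proof.
move=> ak; exists (- (w 0 k / a 0 k)); first by rewrite mulNr divfK.
by apply: (hyperplane_psd (k := k)); rewrite !mxE mulNr divfK // subrr.
Qed.

Lemma form_orthogonal_timelike_ge0 u w :
  form P u u < 0 -> form P w u = 0 -> 0 <= form P w w.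
Proof.
move=> uu_lt0 wu0; have [k uk] : exists k, u 0 k != 0.
  apply: row_coord_neq0; apply: contraTneq uu_lt0 => ->.
  by rewrite /form !mul0mx mxE ltxx.
have [t _] := form_shift_ge0 w uk.
by rewrite form_sqr // wu0; have := sqr_ge0 t; nra.
Qed.

Lemma timelike_unitmx u : form P u u < 0 -> P \in unitmx.
Proof.
move=> uu_lt0; rewrite unitmxE unitfE; apply/negP => /det0P[v v_neq0 vP0].
have [k vk] := row_coord_neq0 v_neq0.
have v_rad b : form P v b = 0 by rewrite /form vP0 !mul0mx mxE.
have [t _] := form_shift_ge0 u vk.
by rewrite form_sqr // (formC Psym u v) !v_rad; lra.
Qed.

Lemma invmx_diag_le0 u k : form P u u < 0 -> invmx P k k <= 0.
Proof.
move=> uu_lt0; have Punit := timelike_unitmx uu_lt0.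
rewrite leNgt; apply/negP => Wkk_gt0.
have [|t tW] := form_shift_ge0 u (a := fund_weight P k) (k := k).
  by rewrite fund_weight_coord gt_eqF.
rewrite fund_weight_coord in tW.
rewrite form_sqr // (formC Psym u) form_weight // form_weights //; nra.
Qed.

Lemma form_future_le0 u a b : form P u u < 0 ->
  form P a a <= 0 -> form P b b <= 0 -> 0 <= form P a u -> 0 <= form P b u ->
  form P a b <= 0.
Proof.
move=> uu_lt0 aa_le0 bb_le0 au_ge0 bu_ge0; set s := form P u u in uu_lt0 *.
(* [proj c] is [s] times the projection of [c] onto the orthogonal of [u],
   where the form is positive semidefinite. *)
pose proj c := s *: c + (- form P c u) *: u.
have proj_u c : form P (proj c) u = 0.
  by rewrite formDl !formZl -/s mulNr mulrC subrr.
have proj_proj c d : form P (proj c) (proj d) =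
    s * (s * form P c d - form P c u * form P d u).
  by rewrite !(formDl, formDr, formZl, formZr) (formC Psym u) -/s; ring.
have proj_ge0 c : 0 <= s * (s * form P c c - form P c u * form P c u).
  by rewrite -proj_proj; apply: form_orthogonal_timelike_ge0 uu_lt0 (proj_u c).
have proj_t t : form P (proj b + t *: proj a) u = 0.
  by rewrite formDl formZl !proj_u mulr0 addr0.
have := form_cauchy_schwarz Psym (form_orthogonal_timelike_ge0 uu_lt0 (proj_u a))
  (fun t => form_orthogonal_timelike_ge0 uu_lt0 (proj_t t)).
have := proj_ge0 a; have := proj_ge0 b; rewrite !proj_proj.
set al := form P a u in au_ge0 *; set be := form P b u in bu_ge0 *.
set A' := s * form P a a - al * al; set B' := s * form P b b - be * be.
set D := s * form P a b - al * be.
have s2_gt0 : 0 < s ^+ 2 by rewrite exprn_even_gt0 // (lt_eqF uu_lt0) orbT.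
have -> : s * A' * (s * B') = s ^+ 2 * (A' * B') by ring.
rewrite exprMn ler_pM2l // => sB' sA' DAB.
have A'_le0 : A' <= 0 by nra.
have B'_le0 : B' <= 0 by nra.
have A'_ge : - (al * al) <= A' by rewrite /A'; nra.
have B'_ge : - (be * be) <= B' by rewrite /B'; nra.
have AB : A' * B' <= (al * be) ^+ 2 by rewrite -mulrNN expr2 mulrACA; apply: ler_pM; lra.
have albe_ge0 := mulr_ge0 au_ge0 bu_ge0.
have : - D <= al * be by nra.
by rewrite /D; nra.
Qed.

Lemma invmx_le0 u k l : (forall t, 0 <= u 0 t) -> form P u u < 0 -> invmx P k l <= 0.
Proof.
move=> u_ge0 uu_lt0; have Punit := timelike_unitmx uu_lt0.
rewrite -form_weights //; apply: (form_future_le0 uu_lt0);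
  by rewrite ?form_weights ?form_weight // (invmx_diag_le0 _ uu_lt0).
Qed.

Lemma form_chamber_face_bound u X i j : (forall t, 0 <= u 0 t) -> form P u u < 0 ->
  P i i = 2 -> (forall k, k != i -> P i k = 0 \/ P i k = -1) ->
  (forall k, (X *m P) 0 k <= 0) -> (X *m P) 0 i = 0 ->
  (forall k, P i k = -1 -> (X *m P) 0 k <= (X *m P) 0 j) ->
  2 * (X *m P) 0 j ^+ 2 <= - form P X X.
Proof.
move=> u_ge0 uu_lt0 Pii Pi_nb chamber face closest.
have Punit := timelike_unitmx uu_lt0.
set c := - (X *m P) 0 j; have c_ge0 : 0 <= c by rewrite oppr_ge0.
set V := c *: 'e_i + (- 2 * c) *: fund_weight P i.
have VP k : (V *m P) 0 k = c * (P i k - 2 * (k == i)%:R).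
  rewrite mulmxDl -!scalemxAl /fund_weight -mulmxA mulVmx // mulmx1 -rowE !mxE /=.
  ring.
have VV : form P V V = c ^+ 2 * (4 * invmx P i i - 2).
  rewrite form_sqr // !formZl !formZr (formC Psym) form_weight // form_weights //.
  by rewrite form_delta -rowE !mxE Pii /= eqxx mulr1; ring.
(* In the coordinates [_ *m P] the form is given by [invmx P], whose entries
   are nonpositive. *)
have XX_le : form P X X <= form P V V.
  rewrite -(form_invmx Psym Punit X X) -(form_invmx Psym Punit V V).
  apply: form_antitone => [k l|k]; first exact: invmx_le0 u_ge0 uu_lt0.
  rewrite VP; have [->|ki] := eqVneq k i; first by rewrite Pii face mulr1 subrr mulr0 lexx.
  rewrite mulr0 subr0; case: (Pi_nb k ki) => Pik; rewrite Pik.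
    by rewrite mulr0 lexx chamber.
  by rewrite mulrN1 oppr_le0 c_ge0 andbT /c opprK closest.
have := invmx_diag_le0 i uu_lt0; have := sqr_ge0 c; rewrite /c sqrrN in VV *; nra.
Qed.

End Lorentzian.
End BilinearForm.

Section CartanMatrix.
Variables (R : realType) (m : nat) (A : 'M[int]_m).
Implicit Types (x y : 'I_m -> R) (i j k l : 'I_m) (J K S T : {set 'I_m}).

Definition gram_mx : 'M[R]_m := map_mx (fun z : int => z%:~R) A.

Definition row_of_fun x : 'rV[R]_m := \row_k x k.

Lemma gram_formE x y : gram_form A x y = form gram_mx (row_of_fun x) (row_of_fun y).
Proof.
by rewrite form_sum; apply: eq_bigr => k _; apply: eq_bigr => l _; rewrite !mxE.
Qed.

Lemma row_of_fun_sroot k : row_of_fun (sroot R k) = 'e_k.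
Proof. by apply/rowP => l; rewrite !mxE. Qed.

Lemma gram_form_sroot x k : gram_form A x (sroot R k) = (row_of_fun x *m gram_mx) 0 k.
Proof. by rewrite gram_formE row_of_fun_sroot form_delta. Qed.

Lemma gram_form_sroots k l : gram_form A (sroot R k) (sroot R l) = (A k l)%:~R.
Proof. by rewrite gram_form_sroot row_of_fun_sroot -rowE !mxE. Qed.

(* Moves [x] along [alpha_j + alpha_i / 2], which is orthogonal to [alpha_i],
   until it becomes orthogonal to [alpha_j]. *)
Definition face_proj x i j : 'I_m -> R := fun k =>
  x k - 2 / 3 * gram_form A x (sroot R j) * (sroot R j k + sroot R i k / 2).

Lemma row_of_fun_face_proj x i j : row_of_fun (face_proj x i j) =
  row_of_fun x + (- (2 / 3 * gram_form A x (sroot R j))) *: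
    (row_of_fun (sroot R j) + 2^-1 *: row_of_fun (sroot R i)).
Proof. by apply/rowP => k; rewrite !mxE /face_proj; ring. Qed.

Lemma face_proj_sroot x i j k : gram_form A (face_proj x i j) (sroot R k) =
  gram_form A x (sroot R k) -
    2 / 3 * gram_form A x (sroot R j) * ((A j k)%:~R + (A i k)%:~R / 2).
Proof.
rewrite [LHS]gram_formE row_of_fun_face_proj !(formDl, formZl) -!gram_formE.
by rewrite !gram_form_sroots; ring.
Qed.

Lemma exists_closest_neighbour x i j0 : A i j0 = -1 ->
  exists2 j, A i j = -1 &
    forall k, A i k = -1 -> gram_form A x (sroot R k) <= gram_form A x (sroot R j).
Proof.
move=> /eqP Aij0.
have := arg_maxP (P := fun k => A i k == -1) (fun k => gram_form A x (sroot R k)) Aij0.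
case=> j /eqP Aij jmax.
by exists j => // k /eqP; apply: jmax.
Qed.

Hypothesis hSL : simply_laced A.

Lemma simply_laced_sym k l : A k l = A l k.
Proof.
have [_ [Aoff Azero]] := hSL; have [<-//|kl] := eqVneq k l.
have lk : l != k by rewrite eq_sym.
case: (Aoff k l kl) => Akl; case: (Aoff l k lk) => Alk; rewrite Akl Alk //.
- by have := (Azero k l).1 Akl; rewrite Alk.
- by have := (Azero k l).2 Alk; rewrite Akl.
Qed.

Lemma gram_mx_sym : gram_mx^T = gram_mx.
Proof. by apply/matrixP => k l; rewrite !mxE simply_laced_sym. Qed.

Lemma intr_diag k : (A k k)%:~R = 2 :> R.
Proof. by have [-> _] := hSL. Qed.

Lemma intr_offdiag_le0 k l : k != l -> (A k l)%:~R <= 0 :> R.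
Proof.
by move=> kl; have [_ [Aoff _]] := hSL; case: (Aoff k l kl) => ->; rewrite ?mulrN1z ?lerN10.
Qed.

Definition dynkin_component J k := [set l in J | connect (dynkin_rel A J) k l].

Lemma dynkin_component_no_edge J a :
  {in dynkin_component J a & J :\: dynkin_component J a, forall k l, A k l = 0}.
Proof.
move=> k l; rewrite !inE => /andP[kJ ak] /andP[la lJ]; apply/eqP.
apply: contraNT la => Akl; rewrite lJ /=; have [<-//|kl] := eqVneq k l.
by apply: connect_trans ak (connect1 _); rewrite /dynkin_rel kJ lJ kl.
Qed.

Lemma subform_split S T (v : 'I_m -> R) : T \subset S ->
  {in T & S :\: T, forall k l, A k l = 0} ->
  subform A S v = subform A T v + subform A (S :\: T) v.
Proof.
move=> TS noedge; rewrite /subform (big_setID T) (finset.setIidPr TS) /=.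
have cross k l : k \in T -> l \in S :\: T -> v k * (A k l)%:~R * v l = 0 /\
    v l * (A l k)%:~R * v k = 0.
  by move=> kT lST; rewrite [A l k]simply_laced_sym noedge // mulr0z !mulr0 !mul0r.
congr (_ + _); apply: eq_bigr => k kT; rewrite (big_setID T) (finset.setIidPr TS) /=.
  by rewrite [X in _ + X]big1 ?addr0 // => l lST; case: (cross k l kT lST).
rewrite big1 ?add0r // => l lT; by case: (cross l k lT kT).
Qed.

Lemma subform_ge0_finite J (v : 'I_m -> R) : finite_type_sub R A J -> 0 <= subform A J v.
Proof.
move=> Jfin; have [[k kJ vk]|v0] := pselect (exists2 k, k \in J & v k != 0).
  by apply/ltW/Jfin; exists k.
rewrite /subform big1 // => k kJ.
have -> : v k = 0 by apply/eqP; apply: contrapT => /negP vk; apply: v0; exists k.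
by rewrite big1 // => l _; rewrite !mul0r.
Qed.

Lemma neighbour_neq i j : A i j = -1 -> j != i.
Proof. by move=> Aij; apply/eqP => ji; move: Aij; rewrite ji; have [-> _] := hSL. Qed.

Lemma dihedral_angle_neighbour i j : A i j = -1 -> dihedral_angle R A i j = pi / 3.
Proof.
move=> Aij; rewrite /dihedral_angle !gram_form_sroots Aij !intr_diag mulrN1z opprK.
have -> : Num.sqrt (2 * 2 : R) = 2 by rewrite -expr2 sqrtr_sqr ger0_norm.
exact: acos_half.
Qed.

Section FaceProjection.
Variables (x : 'I_m -> R) (i j : 'I_m).
Hypotheses (Aij : A i j = -1) (xi : gram_form A x (sroot R i) = 0).

Lemma face_proj_orthogonal :
  gram_form A (face_proj x i j) (sroot R i) = 0 /\
  gram_form A (face_proj x i j) (sroot R j) = 0.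
Proof.
rewrite !face_proj_sroot xi (simply_laced_sym j i) Aij !intr_diag mulrN1z.
by split; field.
Qed.

Lemma face_proj_chamber : in_chamber A x -> in_chamber A (face_proj x i j).
Proof.
move=> xC k; have [->|ki] := eqVneq k i; first by rewrite (face_proj_orthogonal).1.
have [->|kj] := eqVneq k j; first by rewrite (face_proj_orthogonal).2.
rewrite face_proj_sroot; have := xC j; have := xC k.
have := intr_offdiag_le0 (_ : j != k) ; have := intr_offdiag_le0 (_ : i != k).
rewrite eq_sym ki eq_sym kj; nra.
Qed.

Lemma face_proj_gram :
  gram_form A (face_proj x i j) (face_proj x i j) =
    gram_form A x x - 2 / 3 * gram_form A x (sroot R j) ^+ 2 /\
  gram_form A x (face_proj x i j) =
    gram_form A x x - 2 / 3 * gram_form A x (sroot R j) ^+ 2.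
Proof.
set w := row_of_fun (sroot R j) + 2^-1 *: row_of_fun (sroot R i).
have xw : form gram_mx (row_of_fun x) w = gram_form A x (sroot R j).
  by rewrite formDr formZr -!gram_formE xi mulr0 addr0.
have ww : form gram_mx w w = 3 / 2.
  rewrite !(formDl, formDr, formZl, formZr) -!gram_formE !gram_form_sroots.
  by rewrite (simply_laced_sym j i) Aij !intr_diag mulrN1z; field.
rewrite !gram_formE row_of_fun_face_proj -/w; split.
  by rewrite form_sqr ?gram_mx_sym // xw ww -!gram_formE; field.
by rewrite formDr formZr xw -!gram_formE; field.
Qed.

End FaceProjection.

Hypothesis hH : hyperbolic R A.

Lemma subform_ge0 J (v : 'I_m -> R) : J \proper [set: 'I_m] -> 0 <= subform A J v.
Proof.
have [n] := ubnP #|J|; elim: n J => // n IH J /ltnSE Jn Jprop.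
have [Jconn|Jdisc] := pselect (connected_sub A J).
  by case: (hH.2.2.2 J Jprop Jconn) => [/subform_ge0_finite|[]].
have [->|J0] := eqVneq J finset.set0; first by rewrite /subform big_set0.
have [a [b [aJ bJ nab]]] :
    exists a b, [/\ a \in J, b \in J & ~~ connect (dynkin_rel A J) a b].
  apply: contrapT => all_conn; apply: Jdisc; split => // a b aJ bJ.
  by apply: contrapT => /negP nab; apply: all_conn; exists a, b.
set T := dynkin_component J a.
have TJ : T \subset J by apply/fintype.subsetP => t; rewrite inE => /andP[].
have TJprop : T \proper J by apply/properP; split => //; exists b; rewrite ?inE ?bJ.
have JTprop : J :\: T \proper J.
  by apply/properP; split; [exact: finset.subsetDl | exists a; rewrite ?inE ?aJ ?connect0].
rewrite (subform_split v TJ (@dynkin_component_no_edge J a)).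
have sub_lt K : K \proper J -> (#|K| < n)%N by move=> KJ; apply: leq_trans (proper_card KJ) Jn.
by apply: addr_ge0; apply: IH; rewrite ?sub_lt // (sub_proper_trans (proper_sub _) Jprop).
Qed.

Lemma gram_mx_hyperplane_ge0 k (y : 'rV[R]_m) : y 0 k = 0 -> 0 <= form gram_mx y y.
Proof.
move=> yk; have kprop : [set~ k] \proper [set: 'I_m].
  by rewrite properT; apply/eqP => /setP/(_ k); rewrite !inE eqxx.
suff -> : form gram_mx y y = subform A [set~ k] (fun t => y 0 t) by exact: subform_ge0.
rewrite form_sum /subform [RHS]big_mkcond; apply: eq_bigr => s _; rewrite !inE.
have [->|_] := eqVneq s k; first by rewrite big1 // => t _; rewrite yk !mul0r.
rewrite [RHS]big_mkcond; apply: eq_bigr => t _; rewrite !inE mxE.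
by have [->|_] := eqVneq t k; rewrite ?yk ?mulr0.
Qed.

Lemma gram_form_norm_le x :
  gram_form A (fun t => `|x t|) (fun t => `|x t|) <= gram_form A x x.
Proof.
apply: ler_sum => k _; apply: ler_sum => l _; have [<-|kl] := eqVneq k l.
  by rewrite mulrAC [leRHS]mulrAC -normrM -expr2 ger0_norm ?sqr_ge0.
have [_ [Aoff _]] := hSL; case: (Aoff k l kl) => ->; first by rewrite mulr0z !mulr0 !mul0r.
by rewrite !mulrN1z !mulrN1 !mulNr lerN2 -normrM ler_norm.
Qed.

Lemma exists_neighbour i : exists j, A i j = -1.
Proof.
have [k ki] : exists k, k != i.
  apply: contrapT => only_i; apply: hH.2.1 => v [k _ vk].
  have ti t : t = i by apply/eqP; apply: contrapT => /negP ti; apply: only_i; exists t.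
  rewrite /subform (big_pred1 i) => [|t]; last by rewrite (ti t) !inE eqxx.
  rewrite (big_pred1 i) => [|t]; last by rewrite (ti t) !inE eqxx.
  have [-> _] := hSL; rewrite -(ti k) mulrAC -expr2 pmulr_lgt0 ?exprn_even_gt0 //.
have /connectP[[|j p] /= ijp ki'] := hH.1.2 i k (finset.in_setT i) (finset.in_setT k).
  by move: ki; rewrite ki' eqxx.
move: ijp => /andP[/and4P[_ _ ij Aij] _]; exists j.
by have [_ [Aoff _]] := hSL; case: (Aoff i j ij) => // A0; rewrite A0 eqxx in Aij.
Qed.

Lemma chamber_face_bound x i j : in_chamber A x -> gram_form A x x < 0 ->
  gram_form A x (sroot R i) = 0 ->
  (forall k, A i k = -1 -> gram_form A x (sroot R k) <= gram_form A x (sroot R j)) ->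
  2 * gram_form A x (sroot R j) ^+ 2 <= - gram_form A x x.
Proof.
move=> xC xx_lt0 xi closest; rewrite gram_form_sroot gram_formE.
apply: (form_chamber_face_bound gram_mx_sym gram_mx_hyperplane_ge0
  (u := row_of_fun (fun t => `|x t|)) (i := i)).
- by move=> t; rewrite mxE.
- by rewrite -gram_formE (le_lt_trans (gram_form_norm_le x)).
- by rewrite mxE; have [-> _] := hSL.
- move=> k ki; rewrite mxE; have [_ [Aoff _]] := hSL.
  have ik : i != k by rewrite eq_sym.
  by case: (Aoff i k ik) => ->; [left; rewrite mulr0z | right; rewrite mulrN1z].
- by move=> k; rewrite -gram_form_sroot.
- by rewrite -gram_form_sroot.
move=> k; rewrite mxE -!gram_form_sroot => Aik; apply: closest.
by apply: (@intr_inj R); rewrite Aik.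
Qed.

End CartanMatrix.

Unset Implicit Arguments.

Theorem lemma2p2 (R : realType) (m : nat) (A : 'M[int]_m)
  (hSL : simply_laced A) (hH : hyperbolic R A)
  (i : 'I_m) (x : 'I_m -> R)
  (hxC : in_chamber A x) (hxH : gram_form A x x < 0)
  (hxi : gram_form A x (sroot R i) = 0) :
  exists j : 'I_m, j != i /\ dihedral_angle R A i j = pi / 3 /\
    exists y : 'I_m -> R,
      [/\ in_chamber A y, gram_form A y y < 0,
          gram_form A y (sroot R i) = 0, gram_form A y (sroot R j) = 0 &
          hdist A x y <= acosh (Num.sqrt (4 / 3 : R))].
Proof.
have [j0 Aij0] := exists_neighbour hSL hH i.
have [j Aij closest] := exists_closest_neighbour x Aij0.
have bound := chamber_face_bound hSL hH hxC hxH hxi closest.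
have [yi yj] := face_proj_orthogonal hSL Aij hxi.
have [yy xy] := face_proj_gram hSL Aij hxi.
have g2_ge0 := sqr_ge0 (gram_form A x (sroot R j)).
exists j; split; first exact: (neighbour_neq hSL Aij).
split; first exact: (dihedral_angle_neighbour R hSL Aij).
exists (face_proj A x i j); split => //.
- exact: face_proj_chamber.
- by rewrite yy; lra.
by rewrite /hdist xy yy; apply: acosh_sqrt_ratio_le; lra.
Qed.
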